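(* The classes $\mathcal L(RTG)$ and $\mathcal L(LT)$ are incomparable: there is a picture language generated by some regional tile grammar that is not locally testable, and there is a locally testable picture language that is generated by no regional tile grammar.
   Context: Pictures: for a finite alphabet $\Sigma$, a picture over $\Sigma$ is a nonempty rectangular array of elements of $\Sigma$; $\Sigma^{++}$ is the set of all of them; a picture language is a subset of $\Sigma^{++}$. For $\#\notin\Sigma$, $\hat p$ is $p$ surrounded by a one-pixel frame of $\#$'s. For $k\ge2$, a $k$-tile is a $k\times k$ picture; a $2$-tile is called a tile; $\llbracket q\rrbracket$ is the set of tiles occurring as subpictures (on consecutive rows and columns) of $q$. For a finite tile set $\theta$ over $\Gamma\cup\{\#\}$, $LOC(\theta)=\{p\in\Gamma^{++}:\llbracket\hat p\rrbracket\subseteq\theta\}$. A language $L\subseteq\Sigma^{++}$ is locally testable (class $\mathcal L(LT)$) if there are $k\ge 2$ and a finite set $\theta$ of $k$-tiles over $\Sigma\cup\{\#\}$ such that $L$ is the set of $p\in\Sigma^{++}$ all of whose $k\times k$ subpictures of $\hat p$ belong to $\theta$. Subdomains, partitions: a subdomain $(x,y;x',y')$ of $p$ is the rectangle of positions $\{x,\dots,x'\}\times\{y,\dots,y'\}$, $\mathrm{spic}(p,d)$ its subpicture, $d\oplus(a,b)$ its translate. $d$ is $C$-homogeneous (label $C$) if all its pixels equal $C$. Subdomains are adjacent if they share a horizontal or vertical boundary segment of positive length. A homogeneous partition of $p$ is a partition of its positions into homogeneous subdomains; strong if adjacent subdomains have distinct labels (then unique, written $\Pi(p)$); regional if distinct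 subdomains have distinct labels; $\mathrm{unit}(p)$ is the partition into single pixels. A language is regional if each of its pictures admits a regional homogeneous partition. Tile grammars: a TG is $G=(\Sigma,N,S,R)$, $\Sigma,N$ disjoint finite alphabets, $S\in N$, finite rule set $R$ with fixed size rules $A\to t$ ($t\in\Sigma$) and variable size rules $A\to\omega$ ($\omega$ a finite tile set over $N\cup\{\#\}$ with no concave tile, i.e. no tile with rows $(B,B)$ over $(C,B)$ or a rotation of it, $B\ne\#$, $C\ne B$). $(p,\pi)\Rightarrow_G(p',\pi')$ iff for some $A$-homogeneous $d=(x,y;x',y')\in\pi$ and a rule with left side $A$, $p'$ is $p$ with $\mathrm{spic}(p,d)$ replaced by $t$ (rule $A\to t$, $d$ a single pixel) or by some $s\in LOC(\omega)$ of the size of $d$, and $\pi'=(\pi\setminus\{d\})\cup(\Pi(s)\oplus(x-1,y-1))$. $L(G)=\{p\in\Sigma^{++}:(S^{|p|},\{\text{positions of }p\})\Rightarrow_G^*(p,\mathrm{unit}(p))\}$, $S^{|p|}$ the $S$-homogeneous picture of the size of $p$. A regional tile grammar (RTG) is a TG in which $LOC(\omega)$ is regional for every variable size rule $A\to\omega$; $\mathcal L(RTG)$ is the class of languages they generate. *)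

From HB Require Import structures.
From mathcomp Require Import all_boot all_order all_algebra.

Set Implicit Arguments.
Unset Strict Implicit.
Unset Printing Implicit Defensive.

(* A picture over S is a nonempty rectangular array; we store
   it as a matrix with prows.+1 rows and pcols.+1 columns (so it is
   nonempty by construction).  Positions are 0-based (row, column). *)
Record picture (S : Type) := Picture {
  prows : nat;
  pcols : nat;
  pmat  : 'M[S]_(prows.+1, pcols.+1) }.

Definition nrows S (p : picture S) := (prows p).+1.
Definition ncols S (p : picture S) := (pcols p).+1.

Definition pix S (p : picture S) (i j : nat) : S :=
  pmat p (inord i) (inord j).

Definition language (S : Type) := picture S -> Prop.

(* The extra symbol # is represented by None in option S. *)
Definition framed (T : Type) (h w : nat) (g : nat -> nat -> T)
  (i j : nat) : option T :=
  if (0 < i <= h) && (0 < j <= w) then Some (g i.-1 j.-1) else None.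

Definition ktile_at (T : Type) (k : nat) (F : nat -> nat -> T) (i j : nat)
  : 'M[T]_k := \matrix_(a < k, b < k) F (i + a) (j + b).

Definition all_ktiles_in (T : finType) (k : nat) (theta : {set 'M[option T]_k})
  (h w : nat) (g : nat -> nat -> T) : Prop :=
  forall i j, i + k <= h.+2 -> j + k <= w.+2 ->
    ktile_at k (framed h w g) i j \in theta.

Definition locally_testable (Sigma : finType) (L : language Sigma) : Prop :=
  exists k : nat, 2 <= k /\
  exists theta : {set 'M[option Sigma]_k},
    forall p : picture Sigma,
      L p <-> all_ktiles_in theta (nrows p) (ncols p) (pix p).

Definition in_LOC (T : finType) (omega : {set 'M[option T]_2})
  (h w : nat) (g : nat -> nat -> T) : Prop :=
  0 < h /\ 0 < w /\ all_ktiles_in omega h w g.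

(* Subdomains (x, y; x', y') : the rectangle of positions
   {r1..r2} x {c1..c2}. *)
Record rect := Rect { r1 : nat; c1 : nat; r2 : nat; c2 : nat }.

Definition in_rect (d : rect) (i j : nat) : bool :=
  (r1 d <= i <= r2 d) && (c1 d <= j <= c2 d).

Definition shift_rect (a b : nat) (d : rect) : rect :=
  Rect (r1 d + a) (c1 d + b) (r2 d + a) (c2 d + b).

Definition homog (T : Type) (f : nat -> nat -> T) (d : rect) (C : T) : Prop :=
  forall i j, in_rect d i j -> f i j = C.

Definition label (T : Type) (f : nat -> nat -> T) (d : rect) : T :=
  f (r1 d) (c1 d).

(* adjacency: sharing a horizontal or vertical boundary segment of
   positive length *)
Definition adjacent (d e : rect) : Prop :=
  ((r2 d).+1 = r1 e /\ c1 d <= c2 e /\ c1 e <= c2 d) \/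
  ((r2 e).+1 = r1 d /\ c1 d <= c2 e /\ c1 e <= c2 d) \/
  ((c2 d).+1 = c1 e /\ r1 d <= r2 e /\ r1 e <= r2 d) \/
  ((c2 e).+1 = c1 d /\ r1 d <= r2 e /\ r1 e <= r2 d).

Definition partition_set := rect -> Prop.

Definition hom_partition (T : Type) (h w : nat) (f : nat -> nat -> T)
  (pi : partition_set) : Prop :=
  (forall d, pi d ->
     [/\ r1 d <= r2 d, c1 d <= c2 d, r2 d < h, c2 d < w &
         exists C, homog f d C]) /\
  (forall i j, i < h -> j < w -> exists! d, pi d /\ in_rect d i j).

Definition strong_hom_partition (T : Type) (h w : nat) (f : nat -> nat -> T)
  (pi : partition_set) : Prop :=
  hom_partition h w f pi /\
  forall d e, pi d -> pi e -> adjacent d e -> label f d <> label f e.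

Definition regional_hom_partition (T : Type) (h w : nat) (f : nat -> nat -> T)
  (pi : partition_set) : Prop :=
  hom_partition h w f pi /\
  forall d e, pi d -> pi e -> d <> e -> label f d <> label f e.

Definition unit_partition (h w : nat) : partition_set :=
  fun d => [/\ r1 d = r2 d, c1 d = c2 d, r1 d < h & c1 d < w].

Definition whole_partition (h w : nat) : partition_set :=
  fun d => d = Rect 0 0 h.-1 w.-1.

Definition concave_base (T : Type) (B : T) (C : option T) : 'M[option T]_2 :=
  \matrix_(i < 2, j < 2) if (i == 1 :> nat) && (j == 0 :> nat) then C else Some B.

Definition rot90 (T : Type) (t : 'M[T]_2) : 'M[T]_2 :=
  \matrix_(i < 2, j < 2) t (rev_ord j) i.

Definition concave (T : finType) (t : 'M[option T]_2) : Prop :=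
  exists (B : T) (C : option T), C != Some B /\
    exists k, k < 4 /\ t = iter k (@rot90 _) (concave_base B C).

(* Terminals Sigma and nonterminals
   NT are separate finite types (hence disjoint); intermediate pictures
   are over (Sigma + NT).  Rules: fixed size rules A -> t and variable
   size rules A -> omega, omega a (finite) set of tiles over NT + {#}. *)
Record tile_grammar (Sigma NT : finType) := TileGrammar {
  tg_start : NT;
  tg_fixed : seq (NT * Sigma);
  tg_var   : seq (NT * {set 'M[option NT]_2}) }.

Definition tg_wf (Sigma NT : finType) (G : tile_grammar Sigma NT) : Prop :=
  forall A omega, (A, omega) \in tg_var G ->
    forall t, t \in omega -> ~ concave t.

Definition tg_step (Sigma NT : finType) (G : tile_grammar Sigma NT)
  (st st' : (nat -> nat -> Sigma + NT) * partition_set) : Prop :=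
  let: (p, pi) := st in let: (p', pi') := st' in
  exists (d : rect) (A : NT),
    pi d /\ homog p d (inr A) /\
    let h := (r2 d - r1 d).+1 in
    let w := (c2 d - c1 d).+1 in
    exists (s : nat -> nat -> Sigma + NT) (sigma : partition_set),
      ( (exists t : Sigma, (A, t) \in tg_fixed G /\ h = 1 /\ w = 1 /\
                            s 0 0 = inl t)
        \/ (exists (omega : {set 'M[option NT]_2}) (g : nat -> nat -> NT),
              (A, omega) \in tg_var G /\ in_LOC omega h w g /\
              (forall i j, s i j = inr (g i j))) ) /\
      strong_hom_partition h w s sigma /\
      (forall i j, p' i j =
         if in_rect d i j then s (i - r1 d) (j - c1 d) else p i j) /\
      (forall e, pi' e <->
         ((pi e /\ e <> d) \/ exists e0, sigma e0 /\ e = shift_rect (r1 d) (c1 d) e0)).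

Inductive star (X : Type) (R : X -> X -> Prop) : X -> X -> Prop :=
| star_refl x : star R x x
| star_step x y z : R x y -> star R y z -> star R x z.

Definition generates (Sigma NT : finType) (G : tile_grammar Sigma NT)
  (p : picture Sigma) : Prop :=
  exists (q : nat -> nat -> Sigma + NT) (pi : partition_set),
    star (@tg_step Sigma NT G)
      (fun _ _ => inr (tg_start G), whole_partition (nrows p) (ncols p))
      (q, pi) /\
    (forall i j, i < nrows p -> j < ncols p -> q i j = inl (pix p i j)) /\
    (forall e, pi e <-> unit_partition (nrows p) (ncols p) e).

Definition regional_LOC (T : finType) (omega : {set 'M[option T]_2}) : Prop :=
  forall h w (g : nat -> nat -> T), in_LOC omega h w g ->
    exists pi, regional_hom_partition h w g pi.

Definition is_RTG (Sigma NT : finType) (G : tile_grammar Sigma NT) : Prop :=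
  tg_wf G /\ forall A omega, (A, omega) \in tg_var G -> regional_LOC omega.

Definition in_L_RTG (Sigma : finType) (L : language Sigma) : Prop :=
  exists (NT : finType) (G : tile_grammar Sigma NT),
    is_RTG G /\ forall p, L p <-> generates G p.

(* A derivation of a tile grammar is equivalently a tree: a variable size rule
   produces a LOC picture, and the blocks of its strong partition are derived
   independently.

   The regional grammar S -> [A B C], A, B, C -> x generates only the 1 x 3 row.
   Its k x k windows contain those of the 1 x 2 row when k <= 3, while for k >= 4
   the 1 x 1 row has no window at all, so no window test characterises it.

   Pictures constant along diagonals are tested by 2 x 2 windows.  If a regional
   grammar generated them, look at the first rule splitting an n x n such picture,
   n = 2k + 1.  A strong partition of a picture admitting a regional partition is
   itself regional, so the split is determined by where each nonterminal sits:
   at most (n^4 + 1)^|N| possibilities.  Two pictures with the same split can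
   exchange the subtree of any block, and the result is again diagonal constant;
   hence they agree on every diagonal crossing a block boundary.  Of the diagonals
   d and -d at most one lies inside a single block, so k more bits determine the
   picture, and 2^n <= (n^4 + 1)^|N| 2^k fails for large k. *)

From HB Require Import structures.
From mathcomp Require Import all_boot all_order all_algebra zify.
From Stdlib Require Import Classical FunctionalExtensionality PropExtensionality ClassicalEpsilon.

Set Implicit Arguments.
Unset Strict Implicit.
Unset Printing Implicit Defensive.

Definition rect_tuple (d : rect) := (r1 d, c1 d, r2 d, c2 d).
Definition rect_untuple (x : nat * nat * nat * nat) :=
  let: (a, b, c, e) := x in Rect a b c e.
Lemma rect_tupleK : cancel rect_tuple rect_untuple. Proof. by case. Qed.
HB.instance Definition _ := Equality.copy rect (can_type rect_tupleK).

Lemma rect_eta d : d = Rect (r1 d) (c1 d) (r2 d) (c2 d). Proof. by case: d. Qed.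

Lemma in_rectP d i j :
  reflect [/\ r1 d <= i, i <= r2 d, c1 d <= j & j <= c2 d] (in_rect d i j).
Proof.
rewrite /in_rect; apply: (iffP andP) => [[/andP[-> ->] /andP[-> ->]]|[-> -> -> ->]] //.
Qed.

Definition rect_wf (d : rect) := r1 d <= r2 d /\ c1 d <= c2 d.
Definition rheight (d : rect) := (r2 d - r1 d).+1.
Definition rwidth (d : rect) := (c2 d - c1 d).+1.
Definition pixel_rect (d : rect) := r1 d = r2 d /\ c1 d = c2 d.

Definition rect_disjoint (d e : rect) :=
  forall i j, in_rect d i j -> in_rect e i j -> False.

(* The partitions occurring along a derivation are packings. *)
Definition packing (pi : partition_set) :=
  (forall e, pi e -> rect_wf e) /\
  (forall e1 e2, pi e1 -> pi e2 -> e1 <> e2 -> rect_disjoint e1 e2).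

Lemma in_rect_corner d : rect_wf d -> in_rect d (r1 d) (c1 d).
Proof. by case=> H1 H2; rewrite /in_rect !leqnn H1 H2. Qed.

Lemma pixel_rect_wf e : pixel_rect e -> rect_wf e.
Proof. by rewrite /rect_wf; case=> -> ->. Qed.

Lemma in_pixel_rect e i j : pixel_rect e -> in_rect e i j -> i = r1 e /\ j = c1 e.
Proof. by case=> E1 E2 /in_rectP[]; lia. Qed.

Lemma homog_corner T (f : nat -> nat -> T) e C i j :
  homog f e C -> rect_wf e -> in_rect e i j -> f i j = f (r1 e) (c1 e).
Proof. by move=> H Hw Hi; rewrite (H _ _ Hi) (H _ _ (in_rect_corner Hw)). Qed.

Lemma in_shift_rect d e i j : rect_wf d -> r2 e < rheight d -> c2 e < rwidth d ->
  in_rect (shift_rect (r1 d) (c1 d) e) i j ->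
  in_rect d i j /\ in_rect e (i - r1 d) (j - c1 d).
Proof.
rewrite /rheight /rwidth => -[H1 H2] H3 H4 /in_rectP /= [a b c z].
by split; apply/in_rectP; split; lia.
Qed.

Lemma in_shift_rectD d e i j : in_rect e i j ->
  in_rect (shift_rect (r1 d) (c1 d) e) (r1 d + i) (c1 d + j).
Proof. by move=> /in_rectP[a b c z]; apply/in_rectP => /=; split; lia. Qed.

Lemma rheight_shift a b e : rheight (shift_rect a b e) = rheight e.
Proof. by rewrite /rheight /= subnDr. Qed.

Lemma rwidth_shift a b e : rwidth (shift_rect a b e) = rwidth e.
Proof. by rewrite /rwidth /= subnDr. Qed.

Definition rect_code n (e : rect) : 'I_n.+1 * 'I_n.+1 * 'I_n.+1 * 'I_n.+1 :=
  (inord (r1 e), inord (c1 e), inord (r2 e), inord (c2 e)).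
Definition rect_of_code n (x : 'I_n.+1 * 'I_n.+1 * 'I_n.+1 * 'I_n.+1) : rect :=
  Rect x.1.1.1 x.1.1.2 x.1.2 x.2.
Definition bounded_rect n (e : rect) := [/\ r1 e <= n, c1 e <= n, r2 e <= n & c2 e <= n].

Lemma rect_codeK n e : bounded_rect n e -> rect_of_code (rect_code n e) = e.
Proof. by case=> *; rewrite /rect_of_code /= !inordK // -rect_eta. Qed.

Lemma rect_of_codeK n : cancel (@rect_of_code n) (rect_code n).
Proof. by case=> [[[a b] c] e]; rewrite /rect_code /= !inord_val. Qed.

(* Rectangles are not a finite type; the bounded ones are enumerated through their codes. *)
Definition rects_upto n : seq rect :=
  [seq rect_of_code x | x : 'I_n.+1 * 'I_n.+1 * 'I_n.+1 * 'I_n.+1].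

Lemma mem_rects_upto n e : bounded_rect n e -> e \in rects_upto n.
Proof. by move=> He; rewrite -(rect_codeK He); apply: image_f. Qed.

Section HomPartition.
Variables (T : Type) (h w : nat) (f : nat -> nat -> T) (sg : partition_set).
Hypothesis Hs : hom_partition h w f sg.

Lemma hp_block e : sg e -> [/\ r1 e <= r2 e, c1 e <= c2 e, r2 e < h & c2 e < w].
Proof. by case/Hs.1. Qed.

Lemma hp_wf e : sg e -> rect_wf e.
Proof. by case/hp_block. Qed.

Lemma hp_corner e i j : sg e -> in_rect e i j -> f i j = f (r1 e) (c1 e).
Proof. by move=> He; have [a b _ _ [C HC]] := Hs.1 e He; apply: homog_corner HC _. Qed.

Lemma hp_exists i j : i < h -> j < w -> exists e, sg e /\ in_rect e i j.
Proof. by move=> Hi Hj; have [x [Hx _]] := Hs.2 _ _ Hi Hj; exists x. Qed.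

Lemma hp_uniq e1 e2 i j : sg e1 -> sg e2 -> in_rect e1 i j -> in_rect e2 i j -> e1 = e2.
Proof.
move=> H1 H2 I1 I2; have [_ _ Hr Hc] := hp_block H1.
have /in_rectP[a b c z] := I1.
have [x [_ Ux]] := Hs.2 i j ltac:(lia) ltac:(lia).
by rewrite -(Ux e1 (conj H1 I1)) -(Ux e2 (conj H2 I2)).
Qed.

Lemma hp_disjoint e1 e2 : sg e1 -> sg e2 -> e1 <> e2 -> rect_disjoint e1 e2.
Proof. by move=> H1 H2 Hne i j I1 I2; apply: Hne; apply: hp_uniq I1 I2. Qed.

Lemma hp_chain (ci cj : nat -> nat) n :
  (forall t, t <= n -> ci t < h /\ cj t < w) ->
  (forall t, t < n -> exists e,
     [/\ sg e, in_rect e (ci t) (cj t) & in_rect e (ci t.+1) (cj t.+1)]) ->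
  exists e, sg e /\ forall t, t <= n -> in_rect e (ci t) (cj t).
Proof.
move=> Hr Hc; have [e [He Ie]] := hp_exists (Hr 0 isT).1 (Hr 0 isT).2.
exists e; split=> // t; elim: t => // t IH Ht.
have [e' [He' I1 I2]] := Hc t Ht.
by rewrite (hp_uniq He He' (IH (ltnW Ht)) I1).
Qed.

End HomPartition.

Lemma unit_hom_partition T h w (f : nat -> nat -> T) :
  hom_partition h w f (unit_partition h w).
Proof.
split=> [d [E1 E2 Hr Hc]|i j Hi Hj].
  split; rewrite -?E1 -?E2 //; exists (f (r1 d) (c1 d)) => i j Hij.
  by have [-> ->] := in_pixel_rect (conj E1 E2) Hij.
exists (Rect i j i j); split=> [|d [[E1 E2 _ _] /in_rectP[a b c e]]].
  by split=> //; rewrite /in_rect /= !leqnn.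
by rewrite (rect_eta d); congr Rect; lia.
Qed.

Lemma unit_partition11 e : unit_partition 1 1 e -> e = Rect 0 0 0 0.
Proof. by move=> [E1 E2 Hr Hc]; rewrite (rect_eta e); congr Rect; lia. Qed.

Lemma strong_unit_partition11 T (f : nat -> nat -> T) :
  strong_hom_partition 1 1 f (unit_partition 1 1).
Proof.
split=> [|d e /unit_partition11 -> /unit_partition11 ->]; first exact: unit_hom_partition.
by rewrite /adjacent /=; lia.
Qed.

Lemma regional_hom_partition_strong T h w (f : nat -> nat -> T) pi :
  regional_hom_partition h w f pi -> strong_hom_partition h w f pi.
Proof.
move=> [Hs Hreg]; split=> // d e Hd He Hadj; apply: Hreg => // Ede; subst e.
by have [] := hp_block Hs Hd; move: Hadj; rewrite /adjacent; lia.
Qed.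

Section StrongRegional.
Variables (T : Type) (h w : nat) (f : nat -> nat -> T) (sg rho : partition_set).
Hypotheses (Hs : strong_hom_partition h w f sg) (Hr : regional_hom_partition h w f rho).

Lemma strong_side_neighbour e i j : sg e -> i < h -> j < w -> f i j = f (r1 e) (c1 e) ->
  ~~ in_rect e i j ->
  [\/ j = (c2 e).+1 /\ r1 e <= i <= r2 e, j.+1 = c1 e /\ r1 e <= i <= r2 e,
      i = (r2 e).+1 /\ c1 e <= j <= c2 e | i.+1 = r1 e /\ c1 e <= j <= c2 e] -> False.
Proof.
move=> He Hi Hj Hf Hn Hside.
have [e' [He' Ie']] := hp_exists Hs.1 Hi Hj.
have Hne : e <> e' by move=> E; rewrite E Ie' in Hn.
have [? ? _ _] := hp_block Hs.1 He; have [? ? _ _] := hp_block Hs.1 He'.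
have Hdis := hp_disjoint Hs.1 He He' Hne.
suff Hadj : adjacent e e'.
  by apply: (Hs.2 e e' He He' Hadj); rewrite /label -(hp_corner Hs.1 He' Ie') Hf.
move/in_rectP: Ie' => [? ? ? ?]; rewrite /adjacent.
case: Hside => -[E /andP[? ?]].
- right; right; left; split; last lia.
  case: (leqP (c1 e') (c2 e)) => ?; last lia.
  by case: (Hdis i (c2 e)); apply/in_rectP; split; lia.
- right; right; right; split; last lia.
  case: (leqP (c1 e) (c2 e')) => ?; last lia.
  by case: (Hdis i (c1 e)); apply/in_rectP; split; lia.
- left; split; last lia.
  case: (leqP (r1 e') (r2 e)) => ?; last lia.
  by case: (Hdis (r2 e) j); apply/in_rectP; split; lia.
- right; left; split; last lia.
  case: (leqP (r1 e) (r2 e')) => ?; last lia.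
  by case: (Hdis (r1 e) j); apply/in_rectP; split; lia.
Qed.

(* The block e lies inside the regional block R of its corner; if one of its sides
   were strictly inside R, the cell across that side would lie in another strong
   block with the same label, adjacent to e. *)
Lemma strong_block_regional e R : sg e -> rho R -> in_rect R (r1 e) (c1 e) -> e = R.
Proof.
move=> He HR HRe.
have [? ? ? ?] := hp_block Hs.1 He; have [? ? ? ?] := hp_block Hr.1 HR.
have HRf i j : in_rect R i j -> f i j = f (r1 e) (c1 e).
  by move=> Hin; rewrite (hp_corner Hr.1 HR Hin) (hp_corner Hr.1 HR HRe).
have sub i j : in_rect e i j -> in_rect R i j.
  move=> Hin; have /in_rectP[? ? ? ?] := Hin.
  have [R' [HR' IR']] := hp_exists Hr.1 (i := i) (j := j) ltac:(lia) ltac:(lia).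
  have [->|Hne] := eqVneq R R'; first by [].
  case: (Hr.2 R R' HR HR' (elimN eqP Hne)).
  by rewrite /label -(hp_corner Hr.1 HR' IR') -(hp_corner Hr.1 HR HRe) (hp_corner Hs.1 He Hin).
have /in_rectP[? ? ? ?] := HRe.
have /in_rectP[? ? ? ?] : in_rect R (r2 e) (c2 e) by apply/sub/in_rectP; split.
have side i j : in_rect R i j -> ~~ in_rect e i j ->
    [\/ j = (c2 e).+1 /\ r1 e <= i <= r2 e, j.+1 = c1 e /\ r1 e <= i <= r2 e,
        i = (r2 e).+1 /\ c1 e <= j <= c2 e | i.+1 = r1 e /\ c1 e <= j <= c2 e] -> False.
  move=> HRij; have /in_rectP[? ? ? ?] := HRij.
  by apply: strong_side_neighbour He _ _ (HRf i j HRij); lia.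
rewrite (rect_eta e) (rect_eta R); congr Rect; apply/eqP/negPn/negP => /eqP Hne.
- apply: (side (r1 e).-1 (c1 e)); first by apply/in_rectP; split; lia.
    by apply/negP => /in_rectP[]; lia.
  by apply: Or44; lia.
- apply: (side (r1 e) (c1 e).-1); first by apply/in_rectP; split; lia.
    by apply/negP => /in_rectP[]; lia.
  by apply: Or42; lia.
- apply: (side (r2 e).+1 (c1 e)); first by apply/in_rectP; split; lia.
    by apply/negP => /in_rectP[]; lia.
  by apply: Or43; lia.
apply: (side (r1 e) (c2 e).+1); first by apply/in_rectP; split; lia.
  by apply/negP => /in_rectP[]; lia.
by apply: Or41; lia.
Qed.

Lemma strong_partition_regional e1 e2 : sg e1 -> sg e2 ->
  f (r1 e1) (c1 e1) = f (r1 e2) (c1 e2) -> e1 = e2.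
Proof.
move=> H1 H2 Hf.
have [? ? ? ?] := hp_block Hs.1 H1; have [? ? ? ?] := hp_block Hs.1 H2.
have [R1 [HR1 I1]] := hp_exists Hr.1 (i := r1 e1) (j := c1 e1) ltac:(lia) ltac:(lia).
have [R2 [HR2 I2]] := hp_exists Hr.1 (i := r1 e2) (j := c1 e2) ltac:(lia) ltac:(lia).
rewrite (strong_block_regional H1 HR1 I1) (strong_block_regional H2 HR2 I2).
have [//|/eqP Hne] := eqVneq R1 R2; case: (Hr.2 R1 R2 HR1 HR2 Hne).
by rewrite /label -(hp_corner Hr.1 HR1 I1) -(hp_corner Hr.1 HR2 I2).
Qed.

End StrongRegional.

Lemma regional_hom_partition_inj T U (phi : T -> U) h w (f : nat -> nat -> T) pi :
  injective phi -> regional_hom_partition h w f pi ->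
  regional_hom_partition h w (fun i j => phi (f i j)) pi.
Proof.
move=> Hphi [[Hblk Hcov] Hreg]; split; [split=> // d /Hblk[? ? ? ? [C HC]]|].
  by split=> //; exists (phi C) => i j /HC ->.
by move=> d e Hd He Hne /Hphi; apply: Hreg.
Qed.

(** * Derivation trees *)

Lemma star_trans X (R : X -> X -> Prop) x y z : star R x y -> star R y z -> star R x z.
Proof. by elim=> // a b c Hab _ IH /IH; apply: star_step. Qed.

Lemma star1 X (R : X -> X -> Prop) x y : R x y -> star R x y.
Proof. by move=> H; apply: star_step H (star_refl _ _). Qed.

Definition subarray T (f : nat -> nat -> T) (e : rect) : nat -> nat -> T :=
  fun i j => f (r1 e + i) (c1 e + j).

Section Derivations.
Variables (Sigma NT : finType) (G : tile_grammar Sigma NT).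

Inductive derives : NT -> nat -> nat -> (nat -> nat -> Sigma + NT) -> Prop :=
| derives_fixed X t f : (X, t) \in tg_fixed G -> f 0 0 = inl t -> derives X 1 1 f
| derives_var X om g sg h w f : (X, om) \in tg_var G -> in_LOC om h w g ->
   strong_hom_partition h w (fun i j => inr (g i j) : Sigma + NT) sg ->
   (forall e, sg e -> derives (g (r1 e) (c1 e)) (rheight e) (rwidth e) (subarray f e)) ->
   derives X h w f.

Lemma derives_ext X h w f f' : derives X h w f ->
  (forall i j, i < h -> j < w -> f i j = f' i j) -> derives X h w f'.
Proof.
move=> HG; elim: HG f' => {X h w f} [X t f Ht Hf|X om g sg h w f Hom HL Hs _ IH] f' E.
  by apply: derives_fixed Ht _; rewrite -E.
apply: (derives_var Hom HL Hs) => e He; apply: IH => // i j Hi Hj; apply: E;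
  have [] := hp_block Hs.1 He; rewrite /rheight /rwidth in Hi Hj; lia.
Qed.

Lemma tg_stepP p pi p' pi' : tg_step G (p, pi) (p', pi') <->
  exists d A, pi d /\ homog p d (inr A) /\
    exists (s : nat -> nat -> Sigma + NT) (sigma : partition_set),
      ( (exists t : Sigma, (A, t) \in tg_fixed G /\ rheight d = 1 /\ rwidth d = 1 /\
                            s 0 0 = inl t)
        \/ (exists (omega : {set 'M[option NT]_2}) (g : nat -> nat -> NT),
              (A, omega) \in tg_var G /\ in_LOC omega (rheight d) (rwidth d) g /\
              (forall i j, s i j = inr (g i j))) ) /\
      strong_hom_partition (rheight d) (rwidth d) s sigma /\
      (forall i j, p' i j =
         if in_rect d i j then s (i - r1 d) (j - c1 d) else p i j) /\
      (forall e, pi' e <->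
         ((pi e /\ e <> d) \/ exists e0, sigma e0 /\ e = shift_rect (r1 d) (c1 d) e0)).
Proof. by []. Qed.

Lemma packing_step p pi p' pi' : packing pi -> tg_step G (p, pi) (p', pi') -> packing pi'.
Proof.
move=> [Hwf Hdis] /tg_stepP[d [A [Hd [_ [s [sg [_ [Hs [_ Hpi']]]]]]]]].
have sub e0 i j : sg e0 -> in_rect (shift_rect (r1 d) (c1 d) e0) i j ->
    in_rect d i j /\ in_rect e0 (i - r1 d) (j - c1 d).
  by move=> He0; have [_ _ Hr Hc] := hp_block Hs.1 He0; apply: in_shift_rect (Hwf _ Hd) Hr Hc.
split.
  move=> e /Hpi'[[He _]|[e0 [He0 ->]]]; first exact: Hwf.
  by have [Hr Hc _ _] := hp_block Hs.1 He0; rewrite /rect_wf /= !leq_add2r.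
move=> e1 e2 /Hpi' H1 /Hpi' H2 Hne i j I1 I2.
case: H1 H2 => [[H1 N1]|[a [Ha E1]]] [[H2 N2]|[b [Hb E2]]].
- exact: (Hdis _ _ H1 H2 Hne i j).
- by subst e2; have [Id _] := sub _ _ _ Hb I2; apply: (Hdis _ _ H1 Hd N1 i j).
- by subst e1; have [Id _] := sub _ _ _ Ha I1; apply: (Hdis _ _ H2 Hd N2 i j).
subst e1 e2; have [Id Ia] := sub _ _ _ Ha I1; have [_ Ib] := sub _ _ _ Hb I2.
by apply: Hne; rewrite (hp_uniq Hs.1 Ha Hb Ia Ib).
Qed.

Lemma star_terminal p pi q pf i j t :
  star (tg_step G) (p, pi) (q, pf) -> p i j = inl t -> q i j = inl t.
Proof.
move Ex: (p, pi) => x; move Ey: (q, pf) => y Hst.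
elim: Hst p pi Ex Ey => {x y} [x|x [p' pi'] z Hxy _ IH] p pi Ex Ey Ht; subst x.
  by case: Ey => ->.
apply: (IH _ _ erefl Ey).
move: Hxy => /tg_stepP[d [A [_ [Hh [s [sg [_ [_ [-> _]]]]]]]]].
by case: ifP => // /Hh; congruence.
Qed.

Lemma star_derives p pi q pf : star (tg_step G) (p, pi) (q, pf) -> packing pi ->
  (forall e, pf e -> forall X, q (r1 e) (c1 e) <> inr X) ->
  forall d X, pi d -> homog p d (inr X) -> derives X (rheight d) (rwidth d) (subarray q d).
Proof.
move Ex: (p, pi) => x; move Ey: (q, pf) => y Hst.
elim: Hst p pi Ex Ey => {x y} [x|x [p' pi'] z Hxy Hyz IH] p pi Ex Ey Hinv Hfin d X Hd Hh; subst x.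
  case: Ey => Eq Epf; subst q pf.
  by case: (Hfin _ Hd X); apply/Hh/in_rect_corner/Hinv.1.
have Hinv' := packing_step Hinv Hxy.
have Hwd := Hinv.1 _ Hd.
move: (Hxy) => /tg_stepP[d0 [A [Hd0 [Hh0 [s [sg [Hrule [Hs [Hp' Hpi']]]]]]]]].
have [Edd|Hne] := eqVneq d d0; last first.
  apply: (IH _ _ erefl Ey Hinv' Hfin); first by apply/Hpi'; left; split=> //; apply/eqP.
  move=> i j Hij; rewrite Hp'; case: ifP => [Hij0|_]; last exact: Hh.
  by case: (Hinv.2 _ _ Hd Hd0 (elimN eqP Hne) i j Hij Hij0).
subst d0.
have {Hh0} EA : A = X.
  by have := Hh _ _ (in_rect_corner Hwd); rewrite (Hh0 _ _ (in_rect_corner Hwd)); case.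
subst A; case: Hrule => [[t [Ht [-> [-> Es]]]]|[om [g [Hom [HL Es]]]]].
  apply: derives_fixed Ht _; rewrite -Ey in Hyz; apply: (star_terminal Hyz).
  by rewrite /subarray !addn0 Hp' in_rect_corner // !subnn.
have {Es}Esg : s = (fun i j => inr (g i j)).
  by apply: functional_extensionality => i; apply: functional_extensionality.
subst s; apply: (derives_var Hom HL Hs) => e He.
have [_ _ Hr Hc] := hp_block Hs.1 He.
have := IH _ _ erefl Ey Hinv' Hfin (shift_rect (r1 d) (c1 d) e) (g (r1 e) (c1 e)).
rewrite rheight_shift rwidth_shift.
have -> : subarray q (shift_rect (r1 d) (c1 d) e) = subarray (subarray q d) e.
  apply: functional_extensionality => i; apply: functional_extensionality => j.
  by rewrite /subarray /=; f_equal; lia.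
apply; first by apply/Hpi'; right; exists e.
move=> i j Hij; have [Id Ie] := in_shift_rect Hwd Hr Hc Hij.
by rewrite Hp' Id (hp_corner Hs.1 He Ie).
Qed.

End Derivations.

Definition classicb (P : Prop) : bool := if excluded_middle_informative P then true else false.

Lemma classicbP (P : Prop) : reflect P (classicb P).
Proof. by rewrite /classicb; case: excluded_middle_informative => H; constructor. Qed.

Section Completeness.
Variables (Sigma NT : finType) (G : tile_grammar Sigma NT).

Definition fill_array (p : nat -> nat -> Sigma + NT) d (f : nat -> nat -> Sigma + NT) :=
  fun i j => if in_rect d i j then f (i - r1 d) (j - c1 d) else p i j.

(* The partition reached once the block d has been derived down to terminals. *)
Definition fill_partition (pi : partition_set) d : partition_set :=
  fun e => (pi e /\ e <> d) \/ (pixel_rect e /\ in_rect d (r1 e) (c1 e)).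

Lemma packing_fill pi d : packing pi -> pi d -> packing (fill_partition pi d).
Proof.
move=> [Hwf Hdis] Hd.
split=> [e [[He _]|[U _]]|e1 e2 H1 H2 Hne i j I1 I2]; [exact: Hwf|exact: pixel_rect_wf|].
case: H1 H2 => [[H1 N1]|[U1 D1]] [[H2 N2]|[U2 D2]].
- exact: (Hdis _ _ H1 H2 Hne i j).
- by have [Ei Ej] := in_pixel_rect U2 I2; subst i j; apply: (Hdis _ _ H1 Hd N1 _ _ I1 D2).
- by have [Ei Ej] := in_pixel_rect U1 I1; subst i j; apply: (Hdis _ _ H2 Hd N2 _ _ I2 D1).
have [Ei Ej] := in_pixel_rect U1 I1; have [Fi Fj] := in_pixel_rect U2 I2.
apply: Hne; rewrite (rect_eta e1) (rect_eta e2) -U1.1 -U1.2 -U2.1 -U2.2.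
by congr Rect; congruence.
Qed.

Lemma tg_stepI p pi p' pi' d A (s : nat -> nat -> Sigma + NT) (sigma : partition_set) :
  pi d -> homog p d (inr A) ->
  ( (exists t : Sigma, (A, t) \in tg_fixed G /\ rheight d = 1 /\ rwidth d = 1 /\
                        s 0 0 = inl t)
    \/ (exists (omega : {set 'M[option NT]_2}) (g : nat -> nat -> NT),
          (A, omega) \in tg_var G /\ in_LOC omega (rheight d) (rwidth d) g /\
          (forall i j, s i j = inr (g i j))) ) ->
  strong_hom_partition (rheight d) (rwidth d) s sigma ->
  (forall i j, p' i j = if in_rect d i j then s (i - r1 d) (j - c1 d) else p i j) ->
  (forall e, pi' e <->
     ((pi e /\ e <> d) \/ exists e0, sigma e0 /\ e = shift_rect (r1 d) (c1 d) e0)) ->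
  tg_step G (p, pi) (p', pi').
Proof. by move=> *; apply/tg_stepP; exists d, A; do 2!split=> //; exists s, sigma. Qed.

Section FillSeq.
Variable Y : rect -> nat -> nat -> Sigma + NT.

Definition fill_arrays p (cs : seq rect) := foldl (fun p c => fill_array p c (Y c)) p cs.
Definition fill_partitions pi (cs : seq rect) := foldl fill_partition pi cs.

Lemma fill_arrays_out cs p i j :
  (forall c, c \in cs -> ~~ in_rect c i j) -> fill_arrays p cs i j = p i j.
Proof.
elim: cs p => //= c cs IH p H.
rewrite IH => [|c' Hc']; last by apply: H; rewrite inE Hc' orbT.
by rewrite /fill_array (negbTE (H c _)) // mem_head.
Qed.

Lemma fill_arrays_in cs p i j c : uniq cs -> c \in cs -> in_rect c i j ->
  (forall c', c' \in cs -> in_rect c' i j -> c' = c) ->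
  fill_arrays p cs i j = Y c (i - r1 c) (j - c1 c).
Proof.
elim: cs p => //= c0 cs IH p /andP[Hn Hu].
rewrite inE => /orP[/eqP Ec|Hc] Hin Hun; last first.
  by apply: IH => // c' Hc' Hin'; apply: Hun => //; rewrite inE Hc' orbT.
subst c0; rewrite fill_arrays_out => [|c' Hc']; first by rewrite /fill_array Hin.
apply/negP => Hc'in; have Ec' : c' = c by apply: Hun; rewrite ?inE ?Hc' ?orbT.
by move: Hn; rewrite -Ec' Hc'.
Qed.

Lemma fill_partitionsP cs pi e : uniq cs ->
  (forall c c', c \in cs -> c' \in cs -> c <> c' -> rect_disjoint c c') ->
  fill_partitions pi cs e <->
  (pi e /\ e \notin cs) \/ (pixel_rect e /\ exists2 c, c \in cs & in_rect c (r1 e) (c1 e)).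
Proof.
elim: cs pi => [|c cs IH] pi /=; first by move=> _ _; split; [left|case=> [[]|[_ []]]].
move=> /andP[Hn Hu] Hdis.
rewrite IH // => [|a b Ha Hb]; last by apply: Hdis; rewrite inE ?Ha ?Hb orbT.
rewrite /fill_partition; split.
  case=> [[[[He Hne]|[U Hin]] Hnin]|[U [c' Hc' Hin]]].
  - by left; split=> //; rewrite inE negb_or Hnin andbT; apply/eqP.
  - by right; split=> //; exists c; rewrite ?mem_head.
  - by right; split=> //; exists c'; rewrite // inE Hc' orbT.
case=> [[He]|[U [c' Hc' Hin]]].
  by rewrite inE negb_or => /andP[/eqP Hne Hnin]; left; split=> //; left.
move: Hc'; rewrite inE => /orP[/eqP Ec|Hc']; last by right; split=> //; exists c'.
subst c'; left; split; first by right.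
apply/negP => He; have Hec : e <> c by move=> E; move: Hn; rewrite -E He.
apply: (Hdis e c _ (mem_head _ _) Hec _ _ (in_rect_corner (pixel_rect_wf U)) Hin).
by rewrite inE He orbT.
Qed.

Lemma star_fill_arrays cs (lab : rect -> NT) :
  (forall c, c \in cs -> forall p pi, pi c -> packing pi -> homog p c (inr (lab c)) ->
     star (tg_step G) (p, pi) (fill_array p c (Y c), fill_partition pi c)) ->
  uniq cs ->
  forall p pi, packing pi -> (forall c, c \in cs -> pi c /\ homog p c (inr (lab c))) ->
  star (tg_step G) (p, pi) (fill_arrays p cs, fill_partitions pi cs).
Proof.
elim: cs => [|c cs IH] Hc /=; first by move=> _ p pi _ _; apply: star_refl.
move=> /andP[Hn Hu] p pi Hpack Hcs.
have [Hpc Hhc] := Hcs c (mem_head _ _).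
apply: star_trans (Hc c (mem_head _ _) p pi Hpc Hpack Hhc) _.
apply: IH => //; first by move=> c' Hc'; apply: Hc; rewrite inE Hc' orbT.
  exact: packing_fill.
move=> c' Hc'.
have [Hp' Hh'] : pi c' /\ homog p c' (inr (lab c')) by apply: Hcs; rewrite inE Hc' orbT.
have Hne : c' <> c by move=> E; move: Hn; rewrite -E Hc'.
split; first by left.
move=> i j Hij; rewrite /fill_array; case: ifP => [Hij'|_]; last exact: Hh'.
by case: (Hpack.2 _ _ Hp' Hpc Hne i j Hij Hij').
Qed.

End FillSeq.

Definition shifted_blocks (d : rect) (sg : partition_set) : seq rect :=
  undup [seq c <- rects_upto (r2 d + c2 d) |
           classicb (exists e0, sg e0 /\ c = shift_rect (r1 d) (c1 d) e0)].

Section ShiftedBlocks.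
Variables (d : rect) (s : nat -> nat -> Sigma + NT) (sg : partition_set).
Hypotheses (Hwd : rect_wf d) (Hs : hom_partition (rheight d) (rwidth d) s sg).

Lemma mem_shifted_blocks c :
  c \in shifted_blocks d sg <-> exists e0, sg e0 /\ c = shift_rect (r1 d) (c1 d) e0.
Proof.
rewrite mem_undup mem_filter; split=> [/andP[/classicbP //]|H].
rewrite (introT (classicbP _) H); case: H => e0 [He0 ->].
have [] := hp_block Hs He0; move: Hwd; rewrite /rect_wf /rheight /rwidth => -[] *.
by apply: mem_rects_upto; split=> /=; lia.
Qed.

Lemma in_shifted_block e0 i j : sg e0 -> in_rect (shift_rect (r1 d) (c1 d) e0) i j ->
  in_rect d i j /\ in_rect e0 (i - r1 d) (j - c1 d).
Proof. by move=> He0; have [_ _ Hr Hc] := hp_block Hs He0; apply: in_shift_rect. Qed.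

Lemma shifted_blocks_sub c i j :
  c \in shifted_blocks d sg -> in_rect c i j -> in_rect d i j.
Proof. by move=> /mem_shifted_blocks[e0 [He0 ->]] /(in_shifted_block He0)[]. Qed.

Lemma shifted_blocks_disjoint c c' : c \in shifted_blocks d sg ->
  c' \in shifted_blocks d sg -> c <> c' -> rect_disjoint c c'.
Proof.
move=> /mem_shifted_blocks[e0 [He0 ->]] /mem_shifted_blocks[e1 [He1 ->]] Hne i j I0 I1.
have [_ J0] := in_shifted_block He0 I0; have [_ J1] := in_shifted_block He1 I1.
by apply: Hne; rewrite (hp_uniq Hs He0 He1 J0 J1).
Qed.

Lemma shifted_blocks_cover i j : in_rect d i j -> exists c, [/\ c \in shifted_blocks d sg,
  in_rect c i j & forall c', c' \in shifted_blocks d sg -> in_rect c' i j -> c' = c].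
Proof.
move=> Hij; have /in_rectP[? ? ? ?] := Hij.
have [|//|e0 [He0 Ie0]] := hp_exists Hs (i := i - r1 d) (j := j - c1 d).
  by rewrite /rheight; lia.
  by rewrite /rwidth; lia.
have Hc : shift_rect (r1 d) (c1 d) e0 \in shifted_blocks d sg.
  by apply/mem_shifted_blocks; exists e0.
exists (shift_rect (r1 d) (c1 d) e0); split=> // [|c' Hc' Hin].
  by have := in_shift_rectD d Ie0; rewrite !subnKC.
have [//|/eqP Hne] := eqVneq c' (shift_rect (r1 d) (c1 d) e0).
by case: (shifted_blocks_disjoint Hc' Hc Hne Hin); have := in_shift_rectD d Ie0; rewrite !subnKC.
Qed.

Lemma fill_arrays_shifted p f :
  fill_arrays (fun c i j => f (r1 c - r1 d + i) (c1 c - c1 d + j))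
    (fill_array p d s) (shifted_blocks d sg) = fill_array p d f.
Proof.
apply: functional_extensionality => i; apply: functional_extensionality => j.
case Hin: (in_rect d i j); last first.
  rewrite fill_arrays_out => [|c Hc]; first by rewrite /fill_array Hin.
  by apply/negP => /(shifted_blocks_sub Hc); rewrite Hin.
have [c [Hc Hic Hu]] := shifted_blocks_cover Hin.
rewrite (fill_arrays_in _ _ (undup_uniq _) Hc Hic Hu) /fill_array Hin.
by move: Hc Hic => /mem_shifted_blocks[e0 [_ ->]] /in_rectP[/= *]; f_equal; lia.
Qed.

Lemma fill_partitions_shifted pi : packing pi -> pi d ->
  fill_partitions (fun e => (pi e /\ e <> d) \/
                            exists e0, sg e0 /\ e = shift_rect (r1 d) (c1 d) e0)
    (shifted_blocks d sg) = fill_partition pi d.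
Proof.
move=> Hpack Hd; apply: functional_extensionality => e; apply: propositional_extensionality.
rewrite fill_partitionsP ?undup_uniq //; last exact: shifted_blocks_disjoint.
rewrite /fill_partition; split.
  case=> [[[H|/mem_shifted_blocks H] Hn]|[U [c Hc Hin]]]; first by left.
  - by rewrite H in Hn.
  - by right; split=> //; apply: shifted_blocks_sub Hc Hin.
case=> [[He Hne]|[U Hin]].
  left; split; first by left.
  apply/negP => Hc; have Hwe := Hpack.1 _ He.
  exact: (Hpack.2 _ _ He Hd Hne _ _ (in_rect_corner Hwe)
            (shifted_blocks_sub Hc (in_rect_corner Hwe))).
by have [c [Hc Hic _]] := shifted_blocks_cover Hin; right; split=> //; exists c.
Qed.

End ShiftedBlocks.

Lemma derives_star X h w f : derives G X h w f ->
  forall p pi d, pi d -> packing pi -> rheight d = h -> rwidth d = w ->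
  homog p d (inr X) -> star (tg_step G) (p, pi) (fill_array p d f, fill_partition pi d).
Proof.
elim=> {X h w f} [X t f Ht Hf|X om g sg h w f Hom HL Hs _ IH] p pi d Hd Hpack Hh Hw Hhom.
  have [Er Ec] : r2 d = r1 d /\ c2 d = c1 d.
    by have [] := Hpack.1 _ Hd; move: Hh Hw; rewrite /rheight /rwidth; lia.
  apply: star1; apply: (tg_stepI (s := f) (sigma := unit_partition 1 1) Hd Hhom) => //.
  - by left; exists t.
  - by rewrite Hh Hw; apply: strong_unit_partition11.
  move=> e; rewrite /fill_partition /shift_rect.
  split=> [[H|[[E1 E2] /in_rectP[? ? ? ?]]]|[H|[e0 [/unit_partition11 -> ->]]]].
  - by left.
  - by right; exists (Rect 0 0 0 0); split=> //; rewrite (rect_eta e) /=; congr Rect; lia.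
  - by left.
  by right; split; [split|apply/in_rectP => /=; split; lia].
have Hwd := Hpack.1 _ Hd.
rewrite -Hh -Hw in HL Hs.
pose pi1 e := (pi e /\ e <> d) \/ exists e0, sg e0 /\ e = shift_rect (r1 d) (c1 d) e0.
have Hstep : tg_step G (p, pi) (fill_array p d (fun i j => inr (g i j)), pi1).
  apply: (tg_stepI (s := fun i j => inr (g i j)) (sigma := sg) Hd Hhom) => //.
  by right; exists om, g.
apply: star_trans (star1 Hstep) _.
rewrite -(fill_arrays_shifted Hwd Hs.1 p f) -(fill_partitions_shifted Hwd Hs.1 Hpack Hd).
apply: (star_fill_arrays (lab := fun c => g (r1 c - r1 d) (c1 c - c1 d))).
- move=> c /(mem_shifted_blocks Hwd Hs.1)[e0 [He0 ->]] p' pi' Hc' Hpack' Hh'.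
  have := IH e0 He0 p' pi' _ Hc' Hpack' (rheight_shift _ _ _) (rwidth_shift _ _ _).
  by rewrite /shift_rect /= !addnK in Hh' *; apply.
- exact: undup_uniq.
- exact: packing_step Hpack Hstep.
move=> c Hc; split; first by right; apply/(mem_shifted_blocks Hwd Hs.1).
move: Hc => /(mem_shifted_blocks Hwd Hs.1)[e0 [He0 ->]] i j Hin.
have [Id Ie] := in_shifted_block Hwd Hs.1 He0 Hin.
by rewrite /fill_array Id /shift_rect /= !addnK (hp_corner Hs.1 He0 Ie).
Qed.

End Completeness.

Lemma packing_whole h w : packing (whole_partition h w).
Proof. by split=> [e ->|e1 e2 -> -> []]. Qed.

Section Equivalence.
Variables (Sigma NT : finType) (G : tile_grammar Sigma NT).

Lemma generatesP (p : picture Sigma) : generates G p <->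
  derives G (tg_start G) (nrows p) (ncols p) (fun i j => inl (pix p i j)).
Proof.
set d := Rect 0 0 (nrows p).-1 (ncols p).-1.
have Eh : rheight d = nrows p by rewrite /rheight /d /= subn0.
have Ew : rwidth d = ncols p by rewrite /rwidth /d /= subn0.
split=> [[q [pi [Hst [Hq Hpi]]]]|HG].
  have := star_derives Hst (packing_whole _ _) _ (erefl d) (fun i j _ => erefl).
  rewrite Eh Ew => H; apply: derives_ext (H _) _ => [e /Hpi[E1 E2 Hr Hc] X|i j Hi Hj].
    by rewrite Hq.
  by rewrite /subarray /d /= !add0n Hq.
have := derives_star HG (erefl d) (packing_whole _ _) Eh Ew (fun i j _ => erefl).
move=> Hst; exists (fill_array (fun _ _ => inr (tg_start G)) d (fun i j => inl (pix p i j))).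
exists (fill_partition (whole_partition (nrows p) (ncols p)) d); split=> //; split.
  move=> i j Hi Hj; rewrite /fill_array.
  have -> : in_rect d i j.
    by apply/in_rectP; rewrite /d /=; move: Hi Hj; rewrite /nrows /ncols; split; lia.
  by rewrite /d /= !subn0.
move=> e; rewrite /fill_partition /whole_partition /unit_partition /nrows /ncols.
split=> [[[-> []] //|[[E1 E2] /in_rectP[/= *]]]|[E1 E2 Hr Hc]]; first by split=> //; lia.
by right; split=> //; apply/in_rectP => /=; split; lia.
Qed.

End Equivalence.

Section Descent.
Variables (Sigma NT : finType) (G : tile_grammar Sigma NT).

Definition split_derivation Y om (g : nat -> nat -> NT) sg h w (f : nat -> nat -> Sigma + NT) :=
  [/\ (Y, om) \in tg_var G, in_LOC om h w g,
      strong_hom_partition h w (fun i j => inr (g i j) : Sigma + NT) sg,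
      (exists e, sg e /\ e <> Rect 0 0 h.-1 w.-1) &
      forall e, sg e -> derives G (g (r1 e) (c1 e)) (rheight e) (rwidth e) (subarray f e)].

Definition derives_split Y h w f := exists om g sg, split_derivation Y om g sg h w f.

(* A derivation of a picture larger than a pixel starts with a chain of rules that
   do not split; below it, any split derivation may be substituted. *)
Lemma derives_first_split X h w f : derives G X h w f -> ~ (h = 1 /\ w = 1) ->
  exists Y, derives_split Y h w f /\ forall f', derives_split Y h w f' -> derives G X h w f'.
Proof.
elim=> {X h w f} [X t f _ _ []//|X om g sg h w f Hom HL Hs Hch IH Hn].
have [Hnt|Hnt] := classic (exists e, sg e /\ e <> Rect 0 0 h.-1 w.-1).
  exists X; split; first by exists om, g, sg; split.
  by move=> f' [om' [g' [sg' [Hom' HL' Hs' _ Hch']]]]; apply: (derives_var Hom' HL' Hs' Hch').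
have [hp [wp _]] := HL.
set W := Rect 0 0 h.-1 w.-1.
have Hall e : sg e -> e = W by move=> He; apply: NNPP => Hne; apply: Hnt; exists e.
have HW : sg W by have [e [He _]] := hp_exists Hs.1 hp wp; rewrite -(Hall e He).
have EhW : rheight W = h by rewrite /rheight /W /= subn0 prednK.
have EwW : rwidth W = w by rewrite /rwidth /W /= subn0 prednK.
have EfW (f0 : nat -> nat -> Sigma + NT) : subarray f0 W = f0.
  by apply: functional_extensionality => i; apply: functional_extensionality.
have := IH W HW; rewrite EhW EwW EfW => /(_ Hn) [Y [HY Hrep]].
exists Y; split=> // f' Hf'.
by apply: (derives_var Hom HL Hs) => e He; rewrite (Hall e He) EhW EwW EfW; apply: Hrep.
Qed.

End Descent.

(** * Pictures constant along diagonals *)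

Definition diagonal_constant (p : picture bool) : Prop :=
  forall i j, i.+1 < nrows p -> j.+1 < ncols p -> pix p i j = pix p i.+1 j.+1.

Section DiagonalCounting.
Variables (NT : finType) (G : tile_grammar bool NT).
Hypotheses (HG : is_RTG G) (HL : forall p, diagonal_constant p <-> generates G p).
Variable k : nat.
Hypothesis k_gt0 : 0 < k.
Local Notation n := k.*2.+1.

(* The diagonal [j - i = d] with [|d| <= k] carries [u (k + d)]; the two corners
   beyond these 2k + 1 diagonals are false. *)
Definition diag_entry (u : {ffun 'I_n -> bool}) (i j : nat) : bool :=
  if (i <= j + k) && (j <= i + k) then u (inord (j + k - i)) else false.

Definition diag_picture u : picture bool :=
  @Picture bool k.*2 k.*2 (\matrix_(i, j) diag_entry u i j).

Lemma pix_diag_picture u i j : i < n -> j < n -> pix (diag_picture u) i j = diag_entry u i j.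
Proof. by move=> Hi Hj; rewrite /pix mxE !inordK. Qed.

Lemma diag_picture_constant u : diagonal_constant (diag_picture u).
Proof.
move=> i j Hi Hj; rewrite /nrows /ncols /= in Hi Hj.
by rewrite !pix_diag_picture ?(ltnW Hi) ?(ltnW Hj) // /diag_entry !addSn !ltnS subSS.
Qed.

Lemma pix_diag_picture_diag u i0 j0 t : i0 + j0 <= k -> i0 + t < n -> j0 + t < n ->
  pix (diag_picture u) (i0 + t) (j0 + t) = u (inord (k + j0 - i0)).
Proof.
move=> Hd Hi Hj; rewrite pix_diag_picture // /diag_entry.
have -> : (i0 + t <= j0 + t + k) && (j0 + t <= i0 + t + k) by apply/andP; split; lia.
by congr (u (inord _)); lia.
Qed.

Definition terminal_array u : nat -> nat -> bool + NT := fun i j => inl (pix (diag_picture u) i j).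

Record split_data := SplitData {
  split_nt : NT;
  split_tiles : {set 'M[option NT]_2};
  split_labels : nat -> nat -> NT;
  split_blocks : partition_set }.

Definition first_split u (s : split_data) :=
  split_derivation G (split_nt s) (split_tiles s) (split_labels s) (split_blocks s) n n
    (terminal_array u) /\
  forall f', derives_split G (split_nt s) n n f' -> derives G (tg_start G) n n f'.

Lemma first_split_exists u : exists s, first_split u s.
Proof.
have HD := (generatesP G (diag_picture u)).1 ((HL _).1 (@diag_picture_constant u)).
have [|Y [[om [g [sg Hsplit]]] Hrep]] := derives_first_split HD.
  by case=> /eqP; rewrite eqSS double_eq0 => /eqP Hk0; move: k_gt0; rewrite Hk0.
by exists (SplitData Y om g sg).
Qed.

Definition split_of u := proj1_sig (constructive_indefinite_description _ (first_split_exists u)).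

Lemma split_ofP u : first_split u (split_of u).
Proof. exact: proj2_sig (constructive_indefinite_description _ (first_split_exists u)). Qed.

Local Notation labels u := (split_labels (split_of u)).
Local Notation blocks u := (split_blocks (split_of u)).

Lemma blocks_strong u :
  strong_hom_partition n n (fun i j => inr (labels u i j) : bool + NT) (blocks u).
Proof. by have [[]] := split_ofP u. Qed.

Lemma blocks_bounded u e : blocks u e -> bounded_rect k.*2 e.
Proof. by move=> /(hp_block (blocks_strong u).1)[*]; split; lia. Qed.

Lemma blocks_regional u e1 e2 : blocks u e1 -> blocks u e2 ->
  labels u (r1 e1) (c1 e1) = labels u (r1 e2) (c1 e2) -> e1 = e2.
Proof.
have [[Hom HLoc _ _ _] _] := split_ofP u.
have [rho Hrho] := HG.2 _ _ Hom _ _ _ HLoc.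
move=> H1 H2 Hl; apply: (strong_partition_regional (blocks_strong u)
  (regional_hom_partition_inj (@inr_inj bool NT) Hrho) H1 H2).
by rewrite Hl.
Qed.

(* The position of the block carrying each label; by regionality it is well defined. *)
Definition block_map u : {ffun NT -> option ('I_n * 'I_n * 'I_n * 'I_n)} :=
  [ffun X => [pick c | classicb (blocks u (rect_of_code c) /\
                                 labels u (r1 (rect_of_code c)) (c1 (rect_of_code c)) = X)]].

Lemma block_mapE u e : blocks u e ->
  block_map u (labels u (r1 e) (c1 e)) = Some (rect_code k.*2 e).
Proof.
move=> He; rewrite ffunE; case: pickP => [c /classicbP[Hc Hl]|/(_ (rect_code k.*2 e))].
  by rewrite -(blocks_regional Hc He Hl) rect_of_codeK.
by rewrite (rect_codeK (blocks_bounded He)); case/classicbP.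
Qed.

Lemma block_map_blocks u v e : block_map u = block_map v -> blocks u e ->
  blocks v e /\ labels v (r1 e) (c1 e) = labels u (r1 e) (c1 e).
Proof.
move=> Huv He; have := block_mapE He; rewrite Huv ffunE.
case: pickP => // c /classicbP[Hc Hl] [Ec].
by move: Hc Hl; rewrite Ec (rect_codeK (blocks_bounded He)).
Qed.

Lemma same_blocks u v e : block_map u = block_map v -> blocks u e <-> blocks v e.
Proof. by move=> Huv; split=> [/(block_map_blocks Huv)[]|/(block_map_blocks (esym Huv))[]]. Qed.

Definition mixed_picture u v B : picture bool := @Picture bool k.*2 k.*2
  (\matrix_(a, b) if in_rect B a b then pix (diag_picture v) a b else pix (diag_picture u) a b).

Lemma pix_mixed_picture u v B a b : a < n -> b < n ->
  pix (mixed_picture u v B) a b =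
  if in_rect B a b then pix (diag_picture v) a b else pix (diag_picture u) a b.
Proof. by move=> Ha Hb; rewrite /pix mxE !inordK. Qed.

(* Replacing the subtree below one block by the corresponding subtree for another
   picture with the same block map yields a derivation again. *)
Lemma mixed_picture_generated u v B : block_map u = block_map v -> blocks v B ->
  generates G (mixed_picture u v B).
Proof.
move=> Huv HB; have [HBu HBl] := block_map_blocks (esym Huv) HB.
have [[Hom HLoc Hs Hnt Hch] Hrep] := split_ofP u.
have [[_ _ _ _ Hchv] _] := split_ofP v.
apply/generatesP/Hrep; exists (split_tiles (split_of u)), (labels u), (blocks u).
split=> // e He; have [? ? ? ?] := hp_block Hs.1 He.
have [Ee|/eqP Hne] := eqVneq e B; first subst e.
  rewrite HBl; apply: derives_ext (Hchv _ HB) _ => a b Ha Hb.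
  rewrite /rheight /rwidth in Ha Hb.
  rewrite /subarray /terminal_array pix_mixed_picture; try lia.
  by case: ifP => // /negbT/negP[]; apply/in_rectP; split; lia.
apply: derives_ext (Hch _ He) _ => a b Ha Hb.
rewrite /rheight /rwidth in Ha Hb.
rewrite /subarray /terminal_array pix_mixed_picture; try lia.
case: ifP => // Hin; case: (hp_disjoint Hs.1 He HBu Hne _ Hin).
by apply/in_rectP; split; lia.
Qed.

Lemma block_boundary u v i j : block_map u = block_map v -> i.+1 < n -> j.+1 < n ->
  ~ (exists e, [/\ blocks u e, in_rect e i j & in_rect e i.+1 j.+1]) ->
  pix (diag_picture u) i j = pix (diag_picture v) i.+1 j.+1.
Proof.
move=> Huv Hi Hj Hno.
have [B [HB IB]] := hp_exists (blocks_strong v).1 Hi Hj.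
have NB : ~~ in_rect B i j.
  by apply/negP => IB'; apply: Hno; exists B; split=> //; apply/(same_blocks _ Huv).
have := (HL _).2 (mixed_picture_generated Huv HB) i j Hi Hj.
by rewrite !pix_mixed_picture ?(negbTE NB) ?IB // ltnW.
Qed.

Definition diagonal_in_block u i0 j0 :=
  exists e, blocks u e /\ forall t, t <= k.*2 - (i0 + j0) -> in_rect e (i0 + t) (j0 + t).

Lemma diagonal_in_block_eq u v i0 j0 : block_map u = block_map v ->
  diagonal_in_block u i0 j0 <-> diagonal_in_block v i0 j0.
Proof. by move=> Huv; split=> -[e [He Ie]]; exists e; split=> //; apply/(same_blocks e Huv). Qed.

(* Where a diagonal crosses from one block into another, the mixed picture forces
   the entries of u and v on that diagonal to agree. *)
Lemma diagonal_entry_eq u v i0 j0 : block_map u = block_map v -> i0 = 0 \/ j0 = 0 ->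
  i0 + j0 <= k -> ~ diagonal_in_block u i0 j0 ->
  u (inord (k + j0 - i0)) = v (inord (k + j0 - i0)).
Proof.
move=> Huv Hij0 Hd Hnot.
have [t [Ht Hno]] : exists t, t < k.*2 - (i0 + j0) /\ ~ exists e,
    [/\ blocks u e, in_rect e (i0 + t) (j0 + t) & in_rect e (i0 + t).+1 (j0 + t).+1].
  apply: NNPP => Hall; apply: Hnot.
  have [t Ht|t Ht|e [He Ie]] := hp_chain (blocks_strong u).1
    (ci := fun t => i0 + t) (cj := fun t => j0 + t) (n := k.*2 - (i0 + j0)).
  - by split; lia.
  - apply: NNPP => Hno; apply: Hall; exists t; split=> //.
    by rewrite -!addnS.
  by exists e.
rewrite -(pix_diag_picture_diag u (t := t) Hd) -?(pix_diag_picture_diag v (t := t.+1) Hd); try lia.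
by rewrite !addnS; apply: block_boundary => //; lia.
Qed.

Lemma diagonals_not_both_in_block u d : d <= k ->
  diagonal_in_block u 0 d -> diagonal_in_block u d 0 -> False.
Proof.
move=> Hd [e1 [H1 I1]] [e2 [H2 I2]].
have /in_rectP[? ? ? ?] := I1 0 (leq0n _).
have /in_rectP[? ? ? ?] := I1 (k.*2 - d) ltac:(lia).
have /in_rectP[? ? ? ?] := I2 0 (leq0n _).
have /in_rectP[? ? ? ?] := I2 (k.*2 - d) ltac:(lia).
have E12 : e1 = e2.
  by apply: (hp_uniq (blocks_strong u).1 H1 H2 (i := d) (j := d)); apply/in_rectP; split; lia.
subst e2; have [[_ _ _ [e [He Hne]] _] _] := split_ofP u.
have [? ? ? ?] := hp_block (blocks_strong u).1 H1.
have [? ? ? ?] := hp_block (blocks_strong u).1 He.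
apply: Hne; have -> : e = e1.
  apply: (hp_uniq (blocks_strong u).1 He H1 (in_rect_corner (hp_wf (blocks_strong u).1 He))).
  by apply/in_rectP; split; lia.
by rewrite (rect_eta e1); congr Rect; lia.
Qed.

Definition diagonal_bits u : {ffun 'I_k -> bool} :=
  [ffun j : 'I_k => if classicb (diagonal_in_block u 0 j.+1)
                    then u (inord (k + j.+1)) else u (inord (k - j.+1))].

Lemma diagonal_entries_eq u v d : block_map u = block_map v ->
  diagonal_bits u = diagonal_bits v -> d <= k ->
  u (inord (k + d)) = v (inord (k + d)) /\ u (inord (k - d)) = v (inord (k - d)).
Proof.
move=> Huv Hb Hd.
have upper := @diagonal_entry_eq u v 0 d Huv (or_introl erefl); rewrite add0n subn0 in upper.
have lower := @diagonal_entry_eq u v d 0 Huv (or_intror erefl); rewrite !addn0 in lower.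
case: d Hd upper lower => [|j] Hd upper lower.
  have Hu : u (inord (k + 0)) = v (inord (k + 0)).
    by apply: upper => // H; apply: (diagonals_not_both_in_block (leq0n _) H H).
  by rewrite addn0 subn0 in Hu *.
have := congr1 (fun bits : {ffun _ -> _} => bits (Ordinal Hd)) Hb; rewrite !ffunE /=.
have [Hin|Hnin] := classicbP (diagonal_in_block u 0 j.+1).
  rewrite (introT (classicbP _) ((diagonal_in_block_eq _ _ Huv).1 Hin)) => ->; split=> //.
  by apply: lower => // H; apply: (diagonals_not_both_in_block Hd Hin H).
case: classicbP => [/(diagonal_in_block_eq _ _ Huv)//|_ ->].
by split=> //; apply: upper.
Qed.

Lemma diagonal_code_inj : injective (fun u => (block_map u, diagonal_bits u)).
Proof.
move=> u v [Huv Hb]; apply/ffunP => x; have Hx := ltn_ord x.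
have [Hkx|Hxk] := leqP k x.
  have -> : x = inord (k + (x - k)) by apply: val_inj; rewrite /= inordK; lia.
  by apply: (diagonal_entries_eq Huv Hb _).1; lia.
have -> : x = inord (k - (k - x)) by apply: val_inj; rewrite /= inordK; lia.
by apply: (diagonal_entries_eq Huv Hb _).2; lia.
Qed.

Lemma diagonal_count : 2 ^ n <= (n * n * n * n).+1 ^ #|NT| * 2 ^ k.
Proof.
have := leq_card _ diagonal_code_inj.
by rewrite card_prod !card_ffun !card_option !card_prod !card_ord card_bool.
Qed.

End DiagonalCounting.

Lemma leq_exp2rW m1 m2 e : m1 <= m2 -> m1 ^ e <= m2 ^ e.
Proof. by move=> H; case: (posnP e) => [->|He] //; rewrite leq_exp2r. Qed.

Lemma diagonal_count_violated N : exists k, 0 < k /\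
  (k.*2.+1 * k.*2.+1 * k.*2.+1 * k.*2.+1).+1 ^ N * 2 ^ k < 2 ^ k.*2.+1.
Proof.
pose b := 8 * N.+1; pose a := b + b.
have Ha : 4 * a.+1 * N < 2 ^ a.
  have Hb := ltn_expl b (isT : 1 < 2).
  by rewrite /a expnD; apply: leq_trans (ltn_mul Hb Hb); rewrite /b; nia.
have Hk1 : (2 ^ a).-1.+1 = 2 ^ a by rewrite prednK // expn_gt0.
exists (2 ^ a).-1; set k := (2 ^ a).-1; set n := k.*2.+1.
have k_gt0 : 0 < k.
  by rewrite -ltnS Hk1 -[1]/(2 ^ 0) ltn_exp2l // /a /b; lia.
split=> //.
have Hn : n < 2 ^ a.+1 by rewrite expnS -Hk1 /n; lia.
have H4 : (n * n * n * n).+1 <= 2 ^ (a.+1 * 4).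
  rewrite expnM; move: (2 ^ a.+1) Hn => M Hn.
  by rewrite !expnS expn0 muln1 !mulnA; do ?apply: ltn_mul.
apply: (leq_ltn_trans (leq_mul (leq_exp2rW N H4) (leqnn _))).
by rewrite -expnM -expnD ltn_exp2l // /n -Hk1 in Ha *; lia.
Qed.

Definition diagonal_tiles : {set 'M[option bool]_2} :=
  [set t : 'M[option bool]_2 | if (t ord0 ord0, t ord_max ord_max) is (Some x, Some y)
                               then x == y else true].

Lemma diagonal_constant_LT : locally_testable diagonal_constant.
Proof.
exists 2; split=> //; exists diagonal_tiles => p; split.
  move=> Hd i j Hi Hj; rewrite inE /ktile_at !mxE /= !addn0 !addn1 /framed.
  case: ifP => // /andP[/andP[? ?] /andP[? ?]].
  case: ifP => // /andP[/andP[? ?] /andP[? ?]] /=.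
  by apply/eqP; have := Hd i.-1 j.-1; rewrite !prednK //; apply; lia.
move=> H i j Hi Hj.
have Hi2 : i.+1 + 2 <= (nrows p).+2 by rewrite addn2 !ltnS ltnW.
have Hj2 : j.+1 + 2 <= (ncols p).+2 by rewrite addn2 !ltnS ltnW.
have := H i.+1 j.+1 Hi2 Hj2.
by rewrite inE /ktile_at !mxE /= !addn0 !addn1 /framed /= Hi Hj (ltnW Hi) (ltnW Hj) => /eqP.
Qed.

Lemma diagonal_constant_not_RTG : ~ in_L_RTG diagonal_constant.
Proof.
case=> NT [G [HG HL]]; have [k [k_gt0 Hlt]] := diagonal_count_violated #|NT|.
by have := diagonal_count HG HL k_gt0; rewrite leqNgt Hlt.
Qed.

(** * A one-picture regional language *)

Lemma unit_partition13_regional T (f : nat -> nat -> T) :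
  f 0 0 <> f 0 1 -> f 0 1 <> f 0 2 -> f 0 0 <> f 0 2 ->
  regional_hom_partition 1 3 f (unit_partition 1 3).
Proof.
move=> H01 H12 H02; split=> [|d e [Ed Ed' ? ?] [Ee Ee' ? ?] Hne]; first exact: unit_hom_partition.
have Hc : c1 d <> c1 e.
  by move=> Hc; apply: Hne; rewrite (rect_eta d) (rect_eta e) -Ed -Ed' -Ee -Ee' Hc; congr Rect; lia.
have key a b : a < b < 3 -> f 0 a <> f 0 b.
  by case: a b => [|[|?]] [|[|[|?]]] Hab //; exfalso; lia.
rewrite /label (_ : r1 d = 0) 1?(_ : r1 e = 0); try lia.
have [Hde|Hed] := ltnP (c1 d) (c1 e); first by apply: key; lia.
by move/esym; apply: key; lia.
Qed.

Definition abc_nt : finType := option (option bool).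
Definition S3 : abc_nt := None.
Definition A3 : abc_nt := Some None.
Definition B3 : abc_nt := Some (Some false).
Definition C3 : abc_nt := Some (Some true).

(* The horizontal pairs occurring in the framed row # A B C #. *)
Definition abc_pair (a b : option abc_nt) : bool :=
  [|| (a == None) && (b == Some A3), (a == Some A3) && (b == Some B3),
      (a == Some B3) && (b == Some C3) | (a == Some C3) && (b == None)].

Definition abc_tile (x00 x01 x10 x11 : option abc_nt) : bool :=
  (x00 == None) && (x01 == None) && abc_pair x10 x11 ||
  (x10 == None) && (x11 == None) && abc_pair x00 x01.

Definition abc_tiles : {set 'M[option abc_nt]_2} :=
  [set t : 'M[option abc_nt]_2 |
     abc_tile (t ord0 ord0) (t ord0 ord_max) (t ord_max ord0) (t ord_max ord_max)].

Lemma abc_tileP h w (g : nat -> nat -> abc_nt) i j : all_ktiles_in abc_tiles h w g ->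
  i + 2 <= h.+2 -> j + 2 <= w.+2 ->
  abc_tile (framed h w g i j) (framed h w g i j.+1) (framed h w g i.+1 j) (framed h w g i.+1 j.+1).
Proof. by move=> H Hi Hj; have := H i j Hi Hj; rewrite inE /ktile_at !mxE /= !addn0 !addn1. Qed.

Arguments abc_tileP : clear implicits.

Lemma in_LOC_abc h w g : in_LOC abc_tiles h w g ->
  [/\ h = 1, w = 3, g 0 0 = A3, g 0 1 = B3 & g 0 2 = C3].
Proof.
case=> Hh [Hw H].
have := abc_tileP _ _ _ 0 0 H (isT : 0 + 2 <= h.+2) (isT : 0 + 2 <= w.+2).
rewrite /framed /= Hh Hw /= /abc_tile /abc_pair /=.
case E0: (g 0 0) => [[[]|]|] //= _.
have Eh : h = 1.
  case: h Hh H => [//|[//|h]] _ H.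
  have := abc_tileP _ _ _ 1 0 H (isT : 1 + 2 <= h.+4) (isT : 0 + 2 <= w.+2).
  by rewrite /framed /= Hw /= E0 /abc_tile /abc_pair /=.
subst h; case: w Hw H => [//|[|[|[|w]]]] _ H.
- have := abc_tileP _ _ _ 0 1 H (isT : 0 + 2 <= 3) (isT : 1 + 2 <= 3).
  by rewrite /framed /= E0 /abc_tile /abc_pair /=.
- have := abc_tileP _ _ _ 0 1 H (isT : 0 + 2 <= 3) (isT : 1 + 2 <= 4).
  rewrite /framed /= E0 /abc_tile /abc_pair /=.
  case E1: (g 0 1) => [[[]|]|] //= _.
  have := abc_tileP _ _ _ 0 2 H (isT : 0 + 2 <= 3) (isT : 2 + 2 <= 4).
  by rewrite /framed /= E1 /abc_tile /abc_pair /=.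
- have := abc_tileP _ _ _ 0 1 H (isT : 0 + 2 <= 3) (isT : 1 + 2 <= 5).
  rewrite /framed /= E0 /abc_tile /abc_pair /=.
  case E1: (g 0 1) => [[[]|]|] //= _.
  have := abc_tileP _ _ _ 0 2 H (isT : 0 + 2 <= 3) (isT : 2 + 2 <= 5).
  rewrite /framed /= E1 /abc_tile /abc_pair /=.
  by case E2: (g 0 2) => [[[]|]|] //= _.
have := abc_tileP _ _ _ 0 1 H (isT : 0 + 2 <= 3) (isT : 1 + 2 <= w.+4.+2).
rewrite /framed /= E0 /abc_tile /abc_pair /=.
case E1: (g 0 1) => [[[]|]|] //= _.
have := abc_tileP _ _ _ 0 2 H (isT : 0 + 2 <= 3) (isT : 2 + 2 <= w.+4.+2).
rewrite /framed /= E1 /abc_tile /abc_pair /=.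
case E2: (g 0 2) => [[[]|]|] //= _.
have := abc_tileP _ _ _ 0 3 H (isT : 0 + 2 <= 3) (isT : 3 + 2 <= w.+4.+2).
by rewrite /framed /= E2 /abc_tile /abc_pair /=.
Qed.

Lemma concave_not_abc_tile (t : 'M[option abc_nt]_2) : concave t ->
  abc_tile (t ord0 ord0) (t ord0 ord_max) (t ord_max ord0) (t ord_max ord_max) = false.
Proof.
case=> B [C [HC [k [Hk ->]]]].
move: HC; case: k Hk => [|[|[|[|k]]]] // _; rewrite /= /rot90 /concave_base !mxE /=;
  by case: B => [[[]|]|]; case: C => [[[[]|]|]|].
Qed.

Definition abc_grammar : tile_grammar unit abc_nt :=
  TileGrammar S3 [:: (A3, tt); (B3, tt); (C3, tt)] [:: (S3, abc_tiles)].

Lemma abc_grammar_RTG : is_RTG abc_grammar.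
Proof.
split=> A om; rewrite inE => /eqP[_ ->].
  by move=> t Ht Hc; move: Ht; rewrite inE concave_not_abc_tile.
move=> h w g /in_LOC_abc[-> -> E0 E1 E2]; exists (unit_partition 1 3).
by apply: unit_partition13_regional; rewrite ?E0 ?E1 ?E2.
Qed.

Definition unit_row (n : nat) : picture unit := @Picture unit 0 n (const_mx tt).

Definition abc (i j : nat) : abc_nt := if j == 0 then A3 else if j == 1 then B3 else C3.

Lemma abc_generated : generates abc_grammar (unit_row 2).
Proof.
apply/generatesP.
apply: (derives_var (G := abc_grammar) (om := abc_tiles) (g := abc) (sg := unit_partition 1 3)).
- exact: mem_head.
- split=> //; split=> // i j Hi Hj; rewrite inE /ktile_at !mxE /= !addn0 !addn1.
  by case: i Hi => [|[|i]] Hi; case: j Hj => [|[|[|[|j]]]] Hj //; rewrite ?addn2 in Hi Hj.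
- exact/regional_hom_partition_strong/unit_partition13_regional.
move=> e [E1 E2 Hr Hc]; rewrite /rheight /rwidth -E1 -E2 !subnn.
apply: (@derives_fixed _ _ _ _ tt); last by rewrite /subarray; case: (pix _ _ _).
by rewrite /abc; case: (c1 e) Hc => [|[|[|]]].
Qed.

Lemma abc_generated_width n : generates abc_grammar (unit_row n) -> n = 2.
Proof.
move/generatesP => HD; inversion HD as [X t f Ht|X om g sg h w f Hom HL]; subst.
  by move: Ht; rewrite !inE.
by move: Hom HL; rewrite inE => /eqP[->] /in_LOC_abc[_ [->]].
Qed.

(* For k <= 3 every k x k window of the framed 1 x 2 row already occurs in the
   framed 1 x 3 row: shift windows not touching the left frame one column right. *)
Lemma unit_row_ktiles k (theta : {set 'M[option unit]_k}) : k <= 3 ->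
  all_ktiles_in theta 1 3 (pix (unit_row 2)) -> all_ktiles_in theta 1 2 (pix (unit_row 1)).
Proof.
move=> Hk3 H i j Hi Hj; pose j' := if j == 0 then 0 else j.+1.
have Hj' : j' + k <= 5 by rewrite /j'; case: eqP; lia.
suff -> : ktile_at k (framed 1 2 (pix (unit_row 1))) i j =
          ktile_at k (framed 1 3 (pix (unit_row 2))) i j' by exact: H.
apply/matrixP => a b; rewrite !mxE /framed.
have -> : (0 < j + b <= 2) = (0 < j' + b <= 3).
  by have := ltn_ord b; rewrite /j'; case: eqP => ? ?; apply/idP/idP; lia.
by case: ifP => // _; congr Some; case: (pix _ _ _); case: (pix _ _ _).
Qed.

Lemma abc_not_LT : ~ locally_testable (generates abc_grammar).
Proof.
case=> k [_ [theta HL]]; have [Hk3|Hk3] := leqP k 3.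
  have H := unit_row_ktiles Hk3 ((HL (unit_row 2)).1 abc_generated).
  by have := abc_generated_width ((HL (unit_row 1)).2 H).
suff /(HL (unit_row 0))/abc_generated_width : all_ktiles_in theta 1 1 (pix (unit_row 0)) by [].
by move=> i j Hi; lia.
Qed.

Theorem proposition5 :
  (exists (Sigma : finType) (L : language Sigma),
      in_L_RTG L /\ ~ locally_testable L) /\
  (exists (Sigma : finType) (L : language Sigma),
      locally_testable L /\ ~ in_L_RTG L).
Proof.
split.
  exists (unit : finType), (generates abc_grammar); split; last exact: abc_not_LT.
  by exists abc_nt, abc_grammar; split; [exact: abc_grammar_RTG|].
exists (bool : finType), diagonal_constant.
by split; [exact: diagonal_constant_LT|exact: diagonal_constant_not_RTG].
Qed.
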